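(* Let $r_1,\dots,r_N$ be positive numbers. If $f\colon\mathbb{R}^n\to\mathbb{R}^{N\times N}$ is a continuous function of positive type such that (i) $f(x)_{ij}\le 0$ whenever $\|x\|\ge r_i+r_j$, and (ii) $f(x)_{ij}\le -1$ whenever $\|x\|=r_i+r_j$, then the average degree of the contact graph of any packing of balls in $\mathbb{R}^n$ all of whose radii belong to $\{r_1,\dots,r_N\}$ is at most $\max\{f(0)_{ii}: i=1,\dots,N\}$.
   Context: A continuous $f\colon\mathbb{R}^n\to\mathbb{R}^{N\times N}$ is of positive type if for every finite set $U\subseteq\mathbb{R}^n$ the block matrix $(f(x-y))_{x,y\in U}$ (of size $N|U|\times N|U|$) is positive semidefinite. A packing of balls is a finite set of closed balls with pairwise disjoint interiors; its contact graph has the balls as vertices, two distinct balls adjacent iff they are tangent. The average degree of a graph $(V,E)$ is $2|E|/|V|$. *)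

(* classical reals. Points of R^n are lists of reals of length n. *)
From Stdlib Require Import Reals List.
Import ListNotations.
Open Scope R_scope.

Definition rsum (k : nat) (g : nat -> R) : R :=
  fold_right Rplus 0 (map g (seq 0 k)).

Definition vsub (u v : list R) : list R :=
  map (fun p => fst p - snd p) (combine u v).
Definition vzero (n : nat) : list R := repeat 0 n.
Definition vnorm (v : list R) : R :=
  sqrt (fold_right (fun a s => a * a + s) 0 v).

(* An N x N matrix-valued function on R^n: f x i j is the (i,j) entry,
   indices 0 <= i,j < N. *)

(* continuity of f : R^n -> R^{N x N} (entrywise, equivalently in any matrix norm) *)
Definition mat_continuous (n N : nat) (f : list R -> nat -> nat -> R) : Prop :=
  forall x, length x = n -> forall i j, (i < N)%nat -> (j < N)%nat ->
  forall eps, 0 < eps -> exists delta, 0 < delta /\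
    forall y, length y = n -> vnorm (vsub y x) < delta ->
      Rabs (f y i j - f x i j) < eps.

(* positive semidefiniteness of the block matrix (f(x-y))_{x,y in U},
   U = finite set of points given as a duplicate-free list:
   its quadratic form is nonnegative. *)
Definition positive_type (n N : nat) (f : list R -> nat -> nat -> R) : Prop :=
  forall U : list (list R),
    (forall x, In x U -> length x = n) -> NoDup U ->
    forall c : nat -> nat -> R,
      0 <= rsum (length U) (fun a => rsum (length U) (fun b =>
             rsum N (fun i => rsum N (fun j =>
               c a i * c b j * f (vsub (nth a U []) (nth b U [])) i j)))).

(* A ball is a pair (center, radius). *)
Definition ball : Type := (list R * R)%type.

Definition is_packing (n : nat) (P : list ball) : Prop :=
  NoDup P /\
  (forall B, In B P -> length (fst B) = n /\ 0 < snd B) /\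
  (forall a b, (a < length P)%nat -> (b < length P)%nat -> a <> b ->
     ~ exists y, length y = n /\
        vnorm (vsub y (fst (nth a P ([], 0)))) < snd (nth a P ([], 0)) /\
        vnorm (vsub y (fst (nth b P ([], 0)))) < snd (nth b P ([], 0))).

Definition tangent (B1 B2 : ball) : Prop :=
  vnorm (vsub (fst B1) (fst B2)) = snd B1 + snd B2.

Definition num_edges (P : list ball) : R :=
  rsum (length P) (fun a => rsum (length P) (fun b =>
    if Nat.ltb a b then
      (if Req_EM_T (vnorm (vsub (fst (nth a P ([], 0))) (fst (nth b P ([], 0)))))
                   (snd (nth a P ([], 0)) + snd (nth b P ([], 0)))
       then 1 else 0)
    else 0)).

Definition average_degree (P : list ball) : R :=
  2 * num_edges P / INR (length P).

(* max { g i : 0 <= i < N } for N >= 1 *)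
Definition max_upto (N : nat) (g : nat -> R) : R :=
  fold_right Rmax (g 0%nat) (map g (seq 0 N)).

(* Put the coefficient 1 on the radius class of each ball and 0 elsewhere.
   Positivity of the quadratic form of f on the centres gives
   0 <= sum_{a,b} f(x_a - x_b)_{i_a i_b}.  The diagonal contributes at most
   |V| max_i f(0)_ii; off-diagonal pairs are at distance >= r_a + r_b
   (interiors disjoint), so contribute <= 0, and each of the 2|E| ordered
   tangent pairs contributes <= -1.  Hence 2|E| <= |V| max_i f(0)_ii.
   For the empty packing the average degree is 0 / 0 = 0, and the bound holds
   because f(0)_ii >= 0 by positivity. *)
From Stdlib Require Import Reals List Lra Lia.
Import ListNotations.
Open Scope R_scope.

Lemma rsum_S k g : rsum (S k) g = rsum k g + g k.
Proof.
  unfold rsum. rewrite seq_S, map_app, fold_right_app. simpl.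
  generalize (g k); intro x. induction (map g (seq 0 k)); simpl; lra.
Qed.

Lemma rsum_ext k g h : (forall i, (i < k)%nat -> g i = h i) -> rsum k g = rsum k h.
Proof. induction k; intros H; [reflexivity|]. rewrite !rsum_S, IHk, H; auto. Qed.

Lemma rsum_le k g h : (forall i, (i < k)%nat -> g i <= h i) -> rsum k g <= rsum k h.
Proof.
  induction k; intros H; [apply Rle_refl|]. rewrite !rsum_S.
  apply Rplus_le_compat; [apply IHk; auto|apply H; lia].
Qed.

Lemma rsum_plus k g h : rsum k (fun i => g i + h i) = rsum k g + rsum k h.
Proof. induction k; [unfold rsum; simpl; lra|]. rewrite !rsum_S, IHk. lra. Qed.

Lemma rsum_opp k g : rsum k (fun i => - g i) = - rsum k g.
Proof. induction k; [unfold rsum; simpl; lra|]. rewrite !rsum_S, IHk. lra. Qed.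

Lemma rsum_const k x : rsum k (fun _ => x) = INR k * x.
Proof. induction k; [unfold rsum; simpl; lra|]. rewrite rsum_S, IHk, S_INR. lra. Qed.

Lemma rsum_delta k a x : (a < k)%nat -> rsum k (fun i => if Nat.eqb i a then x else 0) = x.
Proof.
  induction k; intros H; [lia|]. rewrite rsum_S.
  destruct (Nat.eq_dec a k) as [->|Hne].
  - rewrite Nat.eqb_refl, (rsum_ext _ _ (fun _ => 0)), rsum_const; [lra|].
    intros i Hi. destruct (Nat.eqb_spec i k); [lia|auto].
  - rewrite IHk by lia. destruct (Nat.eqb_spec k a); [lia|lra].
Qed.

Lemma rsum_comm m k g :
  rsum m (fun a => rsum k (fun b => g a b)) = rsum k (fun b => rsum m (fun a => g a b)).
Proof.
  induction m.
  - rewrite (rsum_ext k _ (fun _ => 0)) by reflexivity.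
    rewrite rsum_const. unfold rsum; simpl; lra.
  - rewrite rsum_S, IHm, <- rsum_plus. apply rsum_ext. intros. now rewrite rsum_S.
Qed.

Lemma rsum_indicator2 N (F : nat -> nat -> R) p q : (p < N)%nat -> (q < N)%nat ->
  rsum N (fun i => rsum N (fun j =>
    (if Nat.eqb i p then 1 else 0) * (if Nat.eqb j q then 1 else 0) * F i j)) = F p q.
Proof.
  intros Hp Hq.
  rewrite (rsum_ext _ _ (fun i => if Nat.eqb i p then F p q else 0)); [now apply rsum_delta|].
  intros i _.
  rewrite (rsum_ext _ _ (fun j => if Nat.eqb j q then
             (if Nat.eqb i p then 1 else 0) * F i q else 0)).
  - rewrite rsum_delta by auto. destruct (Nat.eqb_spec i p) as [->|]; ring.
  - intros j _. destruct (Nat.eqb_spec j q) as [->|]; ring.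
Qed.

Lemma double_sum_bound m M (G T : nat -> nat -> R) :
  0 <= rsum m (fun a => rsum m (G a)) ->
  (forall a b, (a < m)%nat -> (b < m)%nat ->
     G a b <= (if Nat.eqb a b then M else 0) - T a b - T b a) ->
  2 * rsum m (fun a => rsum m (T a)) <= INR m * M.
Proof.
  intros Hpos HG.
  assert (Hsum : rsum m (fun a => rsum m (G a))
     <= rsum m (fun a => M - rsum m (T a) - rsum m (fun b => T b a))).
  { apply rsum_le; intros a Ha.
    rewrite <- (rsum_delta m a M Ha). unfold Rminus. rewrite <- !rsum_opp, <- !rsum_plus.
    apply rsum_le; intros b Hb.
    eapply Rle_trans; [apply (HG a b Ha Hb)|]. destruct (Nat.eqb_spec a b), (Nat.eqb_spec b a); try lia; lra. }
  unfold Rminus in Hsum.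
  rewrite !rsum_plus, !rsum_opp, rsum_const, (rsum_comm m m (fun b a => T a b)) in Hsum.
  replace (rsum m (fun b => rsum m (fun a => T b a))) with (rsum m (fun a => rsum m (T a)))
    in Hsum by reflexivity.
  lra.
Qed.

Lemma div_INR_le x M m : 0 <= M -> x <= INR m * M -> x / INR m <= M.
Proof.
  intros HM Hx. destruct m as [|m].
  - now rewrite Rdiv_0_r.
  - assert (0 < INR (S m)) by apply lt_0_INR, Nat.lt_0_succ.
    apply Rmult_le_reg_r with (INR (S m)); auto.
    unfold Rdiv. rewrite Rmult_assoc, Rinv_l; lra.
Qed.

Lemma max_upto_ge N g i : (i < N)%nat -> g i <= max_upto N g.
Proof.
  intros H. unfold max_upto. assert (I : In i (seq 0 N)) by (apply in_seq; lia).
  generalize (g 0%nat). induction (seq 0 N) as [|x l IH]; intros d; simpl in *; [contradiction|].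
  destruct I as [->|I]; [apply Rmax_l|]. eapply Rle_trans; [apply IH; auto|apply Rmax_r].
Qed.

Lemma finite_choice (Q : nat -> nat -> Prop) m :
  (forall a, (a < m)%nat -> exists i, Q a i) -> exists k, forall a, (a < m)%nat -> Q a (k a).
Proof.
  induction m as [|m IH]; intros H; [exists (fun _ => 0%nat); intros; lia|].
  destruct IH as [k Hk]; [intros; apply H; lia|].
  destruct (H m) as [i Hi]; [lia|].
  exists (fun a => if Nat.eqb a m then i else k a). intros a Ha.
  destruct (Nat.eqb_spec a m) as [->|]; [auto|apply Hk; lia].
Qed.

Definition sumsq (v : list R) : R := fold_right (fun a s => a * a + s) 0 v.

Definition vlerp (t : R) (u v : list R) : list R :=
  map (fun p => fst p + t * (snd p - fst p)) (combine u v).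

Lemma sumsq_nonneg v : 0 <= sumsq v.
Proof. induction v; simpl; nra. Qed.

Lemma vsub_length u v : length u = length v -> length (vsub u v) = length u.
Proof. intros. unfold vsub. rewrite length_map, length_combine. lia. Qed.

Lemma vlerp_length t u v : length u = length v -> length (vlerp t u v) = length u.
Proof. intros. unfold vlerp. rewrite length_map, length_combine. lia. Qed.

Lemma vsub_diag u : vsub u u = vzero (length u).
Proof.
  unfold vzero. induction u; simpl; auto.
  unfold vsub in *; simpl. rewrite IHu. f_equal. ring.
Qed.

Lemma vnorm_vzero k : vnorm (vzero k) = 0.
Proof.
  change (sqrt (sumsq (vzero k)) = 0).
  replace (sumsq (vzero k)) with 0; [apply sqrt_0|].
  induction k; [reflexivity|].
  change (0 = 0 * 0 + sumsq (vzero k)). rewrite <- IHk. ring.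
Qed.

Lemma vnorm_vsub_comm u v : vnorm (vsub u v) = vnorm (vsub v u).
Proof.
  unfold vnorm. f_equal. revert v.
  induction u; intros [|b v]; simpl; try reflexivity.
  unfold vsub in *; simpl. rewrite IHu. ring.
Qed.

Lemma sumsq_vlerp_l t u v : length u = length v ->
  sumsq (vsub (vlerp t u v) u) = t * t * sumsq (vsub u v).
Proof.
  revert v; induction u; intros [|b v] H; simpl in *; try lra; try lia.
  unfold vsub, vlerp in *; simpl. rewrite IHu by lia. ring.
Qed.

Lemma sumsq_vlerp_r t u v : length u = length v ->
  sumsq (vsub (vlerp t u v) v) = (1 - t) * (1 - t) * sumsq (vsub u v).
Proof.
  revert v; induction u; intros [|b v] H; simpl in *; try lra; try lia.
  unfold vsub, vlerp in *; simpl. rewrite IHu by lia. ring.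
Qed.

Lemma sqrt_scale t S : 0 <= t -> 0 <= S -> sqrt (t * t * S) = t * sqrt S.
Proof. intros. rewrite sqrt_mult_alt, sqrt_square by nra. reflexivity. Qed.

Lemma vnorm_vlerp_l t u v : length u = length v -> 0 <= t ->
  vnorm (vsub (vlerp t u v) u) = t * vnorm (vsub u v).
Proof.
  intros. unfold vnorm. fold (sumsq (vsub (vlerp t u v) u)) (sumsq (vsub u v)).
  rewrite sumsq_vlerp_l, sqrt_scale; auto using sumsq_nonneg.
Qed.

Lemma vnorm_vlerp_r t u v : length u = length v -> t <= 1 ->
  vnorm (vsub (vlerp t u v) v) = (1 - t) * vnorm (vsub u v).
Proof.
  intros. unfold vnorm. fold (sumsq (vsub (vlerp t u v) v)) (sumsq (vsub u v)).
  rewrite sumsq_vlerp_r, sqrt_scale; auto using sumsq_nonneg; lra.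
Qed.

Definition center (P : list ball) (a : nat) : list R := fst (nth a P ([], 0)).
Definition radius (P : list ball) (a : nat) : R := snd (nth a P ([], 0)).

Lemma nth_map_fst (P : list ball) a : nth a (map fst P) [] = center P a.
Proof. unfold center. change (@nil R) with (fst (@nil R, 0)) at 1. apply map_nth. Qed.

Lemma packing_ball n P a : is_packing n P -> (a < length P)%nat ->
  length (center P a) = n /\ 0 < radius P a.
Proof. intros (_ & HB & _) Ha. apply HB, nth_In, Ha. Qed.

(* Otherwise the point dividing the segment between the centres in the ratio
   r_a : r_b lies in both open balls. *)
Lemma packing_centers_far n P a b : is_packing n P ->
  (a < length P)%nat -> (b < length P)%nat -> a <> b ->
  radius P a + radius P b <= vnorm (vsub (center P a) (center P b)).
Proof.
  intros HP Ha Hb Hab.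
  destruct (packing_ball n P a HP Ha) as [La Ra].
  destruct (packing_ball n P b HP Hb) as [Lb Rb].
  destruct HP as (_ & _ & HD).
  destruct (Rle_or_lt (radius P a + radius P b) (vnorm (vsub (center P a) (center P b))))
    as [|Hlt]; auto.
  exfalso. apply (HD a b Ha Hb Hab).
  change (exists y, length y = n /\ vnorm (vsub y (center P a)) < radius P a /\
                    vnorm (vsub y (center P b)) < radius P b).
  set (t := radius P a / (radius P a + radius P b)).
  assert (Ht : t * (radius P a + radius P b) = radius P a) by (unfold t; field; lra).
  assert (Ht0 : 0 <= t) by (unfold t; apply Rlt_le, Rdiv_lt_0_compat; lra).
  assert (Ht1 : t <= 1) by nra.
  exists (vlerp t (center P a) (center P b)).
  rewrite vlerp_length, vnorm_vlerp_l, vnorm_vlerp_r by (lia || lra).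
  assert (0 <= vnorm (vsub (center P a) (center P b))) by apply sqrt_pos.
  repeat split; [lia|nra|nra].
Qed.

Lemma packing_centers_NoDup n P : is_packing n P -> NoDup (map fst P).
Proof.
  intros HP. apply (NoDup_nth (map fst P) []). rewrite length_map.
  intros a b Ha Hb E. destruct (Nat.eq_dec a b) as [|Hab]; auto. exfalso.
  rewrite !nth_map_fst in E.
  pose proof (packing_centers_far n P a b HP Ha Hb Hab) as F.
  rewrite E, vsub_diag, vnorm_vzero in F.
  pose proof (packing_ball n P a HP Ha). pose proof (packing_ball n P b HP Hb). lra.
Qed.

Definition contact (P : list ball) (a b : nat) : R :=
  if Nat.ltb a b then
    (if Req_EM_T (vnorm (vsub (center P a) (center P b))) (radius P a + radius P b)
     then 1 else 0)
  else 0.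

Lemma num_edges_contact P :
  num_edges P = rsum (length P) (fun a => rsum (length P) (contact P a)).
Proof. reflexivity. Qed.

Lemma contact_pair P a b : a <> b ->
  contact P a b + contact P b a = 0 \/
  (contact P a b + contact P b a = 1 /\
   vnorm (vsub (center P a) (center P b)) = radius P a + radius P b).
Proof.
  intros Hab. unfold contact.
  destruct (Nat.ltb_spec a b), (Nat.ltb_spec b a); try lia;
    destruct Req_EM_T as [E|E]; try (left; lra).
  - right. split; [lra|exact E].
  - right. rewrite vnorm_vsub_comm, E. split; lra.
Qed.

Lemma positive_type_select n N f U (k : nat -> nat) :
  positive_type n N f -> (forall x, In x U -> length x = n) -> NoDup U ->
  (forall a, (a < length U)%nat -> (k a < N)%nat) ->
  0 <= rsum (length U) (fun a => rsum (length U) (fun b =>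
         f (vsub (nth a U []) (nth b U [])) (k a) (k b))).
Proof.
  intros Hpt HU Hnd Hk.
  eapply Rle_trans; [apply (Hpt U HU Hnd (fun a i => if Nat.eqb i (k a) then 1 else 0))|].
  right. apply rsum_ext; intros a Ha. apply rsum_ext; intros b Hb.
  apply rsum_indicator2; auto.
Qed.

Lemma positive_type_diag_nonneg n N f i :
  positive_type n N f -> (i < N)%nat -> 0 <= f (vzero n) i i.
Proof.
  intros Hpt Hi.
  assert (H := positive_type_select n N f [vzero n] (fun _ => i) Hpt).
  unfold rsum in H; simpl in H.
  rewrite vsub_diag in H. replace (length (vzero n)) with n in H by (symmetry; apply repeat_length).
  enough (0 <= f (vzero n) i i + 0 + 0) by lra.
  apply H; auto.
  - intros x [<-|[]]. apply repeat_length.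
  - constructor; [intros []|constructor].
Qed.

Lemma packing_kernel_bound n N r f P (k : nat -> nat) M :
  (forall x i j, length x = n -> (i < N)%nat -> (j < N)%nat ->
     r i + r j <= vnorm x -> f x i j <= 0) ->
  (forall x i j, length x = n -> (i < N)%nat -> (j < N)%nat ->
     vnorm x = r i + r j -> f x i j <= -1) ->
  is_packing n P ->
  (forall a, (a < length P)%nat -> (k a < N)%nat /\ radius P a = r (k a)) ->
  (forall i, (i < N)%nat -> f (vzero n) i i <= M) ->
  forall a b, (a < length P)%nat -> (b < length P)%nat ->
  f (vsub (center P a) (center P b)) (k a) (k b)
    <= (if Nat.eqb a b then M else 0) - contact P a b - contact P b a.
Proof.
  intros Hfar Htan HP Hk HM a b Ha Hb.
  destruct (Hk a Ha) as [Ia Ra], (Hk b Hb) as [Ib Rb].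
  destruct (packing_ball n P a HP Ha) as [La _], (packing_ball n P b HP Hb) as [Lb _].
  assert (Lab : length (vsub (center P a) (center P b)) = n) by (rewrite vsub_length; lia).
  destruct (Nat.eq_dec a b) as [<-|Hab].
  - rewrite Nat.eqb_refl, vsub_diag, La. unfold contact. rewrite Nat.ltb_irrefl.
    specialize (HM _ Ia). lra.
  - apply Nat.eqb_neq in Hab as Hab'. rewrite Hab'.
    pose proof (packing_centers_far n P a b HP Ha Hb Hab) as Hd.
    rewrite Ra, Rb in Hd.
    destruct (contact_pair P a b Hab) as [C|[C E]].
    + specialize (Hfar _ _ _ Lab Ia Ib Hd). lra.
    + rewrite Ra, Rb in E. specialize (Htan _ _ _ Lab Ia Ib E). lra.
Qed.

Theorem theorem4p1 (n N : nat) (r : nat -> R) (f : list R -> nat -> nat -> R) :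
  (1 <= N)%nat ->
  (forall i, (i < N)%nat -> 0 < r i) ->
  mat_continuous n N f ->
  positive_type n N f ->
  (forall x i j, length x = n -> (i < N)%nat -> (j < N)%nat ->
     r i + r j <= vnorm x -> f x i j <= 0) ->
  (forall x i j, length x = n -> (i < N)%nat -> (j < N)%nat ->
     vnorm x = r i + r j -> f x i j <= -1) ->
  forall P : list ball,
    is_packing n P ->
    (forall B, In B P -> exists i, (i < N)%nat /\ snd B = r i) ->
    average_degree P <= max_upto N (fun i => f (vzero n) i i).
Proof.
  intros HN _ _ Hpt Hfar Htan P HP Hrad.
  set (M := max_upto N (fun i => f (vzero n) i i)).
  assert (HM : forall i, (i < N)%nat -> f (vzero n) i i <= M)
    by (intros i Hi; apply (max_upto_ge N (fun i => f (vzero n) i i)), Hi).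
  destruct (finite_choice (fun a i => (i < N)%nat /\ radius P a = r i) (length P))
    as [k Hk].
  { intros a Ha. apply Hrad, nth_In, Ha. }
  assert (HU : forall x, In x (map fst P) -> length x = n).
  { intros x Hx. apply in_map_iff in Hx as [B [<- HB]].
    destruct HP as (_ & Hball & _). apply Hball, HB. }
  pose proof (positive_type_select n N f (map fst P) k Hpt HU
                (packing_centers_NoDup n P HP)) as Hpos.
  rewrite length_map in Hpos.
  unfold average_degree. rewrite num_edges_contact.
  apply div_INR_le.
  - apply Rle_trans with (f (vzero n) 0%nat 0%nat);
      [apply (positive_type_diag_nonneg n N)|apply HM]; auto.
  - apply (double_sum_bound _ _ _ _ (Hpos (fun a Ha => proj1 (Hk a Ha)))).
    intros a b Ha Hb. rewrite !nth_map_fst.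
    apply (packing_kernel_bound n N r); auto.
Qed.
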